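(* Let $C$ be a subring of a ring $D$ (with the same identity). Then $R[D,C]$ is weakly $r$-clean if and only if $D$ is $r$-clean and $C$ is weakly $r$-clean.
   Context: Rings are associative with identity. For a subring $C$ of $D$, $R[D,C]$ is the ring of all sequences $(a_1,a_2,\dots,a_n,c,c,c,\dots)$ with $n\ge1$, $a_i\in D$, $c\in C$ (i.e. sequences in $D$ that are eventually constant with constant value in $C$), with componentwise addition and multiplication. $Idem(R)$ denotes idempotents and $Reg(R)=\{r: r=ryr \text{ for some } y\in R\}$ regular elements. A ring is $r$-clean if every element is $r+e$ with $r\in Reg$, $e\in Idem$; an element is weakly $r$-clean if it equals $r+e$ or $r-e$ with $r\in Reg$, $e\in Idem$, and a ring is weakly $r$-clean if all its elements are. *)

From HB Require Import structures.
From mathcomp Require Import all_boot all_order all_algebra.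
From mathcomp Require Import boolp functions.
Set Implicit Arguments. Unset Strict Implicit. Unset Printing Implicit Defensive.
Import GRing.Theory.
Local Open Scope ring_scope.

(* Ring-theoretic notions, relative to a subring given by a predicate S of an
   ambient ring R (the ring operations of S are those of R). *)
Section Notions.
Variable R : pzRingType.

Definition Idem_in (S : {pred R}) (e : R) : Prop := e \in S /\ e * e = e.
Definition Reg_in (S : {pred R}) (r : R) : Prop :=
  r \in S /\ exists2 y, y \in S & r = r * y * r.

Definition rclean_in (S : {pred R}) : Prop :=
  forall x, x \in S -> exists r e, [/\ Reg_in S r, Idem_in S e & x = r + e].

Definition weakly_rclean_elt_in (S : {pred R}) (x : R) : Prop :=
  exists r e, [/\ Reg_in S r, Idem_in S e & (x = r + e \/ x = r - e)].

Definition weakly_rclean_in (S : {pred R}) : Prop :=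
  forall x, x \in S -> weakly_rclean_elt_in S x.

Definition rclean : Prop := rclean_in predT.
Definition weakly_rclean : Prop := weakly_rclean_in predT.
End Notions.

(* R[D,C]: sequences in D (elements of the pointwise ring nat -> D) that are
   eventually constant with constant value in C. *)
Definition RDC (D : pzRingType) (C : {pred D}) : {pred nat -> D} :=
  fun f => `[< exists n, exists2 c, c \in C & forall i, (n <= i)%N -> f i = c >].

From HB Require Import structures.
From mathcomp Require Import all_boot all_order all_algebra.
From mathcomp Require Import boolp functions.
Set Implicit Arguments. Unset Strict Implicit. Unset Printing Implicit Defensive.
Local Open Scope ring_scope.
Import GRing.Theory.

(* A weak decomposition of a sequence in R[D,C] restricts, with the same
   sign, to decompositions in D at every index and in C along the constant
   tail; conversely coordinatewise decompositions of a common sign glue, as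
   only finitely many coordinates lie before the tail.  Keeping the sign is
   the point: a weak decomposition of (x, -x, 0, 0, ...) either gives
   x = r + e at index 0 or -x = r - e at index 1, i.e. x = (-r) + e.
   Symmetrically, in an r-clean ring every x is also of the form r - e,
   which is what gluing needs when the tail is of that form. *)

Section SignedDecomposition.
Variable R : pzRingType.
Implicit Types (S : {pred R}) (b : bool) (x r e : R).

Definition signed_rclean_elt_in S b x : Prop :=
  exists r e, [/\ Reg_in S r, Idem_in S e & x = r + (-1) ^+ b * e].

Lemma weakly_rclean_eltP S x :
  weakly_rclean_elt_in S x <-> exists b, signed_rclean_elt_in S b x.
Proof.
split=> [[r [e [Rr Ie [->|->]]]]|[b [r [e [Rr Ie ->]]]]].
- by exists false, r, e; rewrite expr0 mul1r.
- by exists true, r, e; rewrite expr1 mulN1r.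
- by exists r, e; case: b; rewrite ?expr0 ?mul1r ?expr1 ?mulN1r; split=> //; [right|left].
Qed.

Lemma Reg_inN S r : GRing.oppr_closed S -> Reg_in S r -> Reg_in S (- r).
Proof.
move=> SN [Sr [y Sy Ry]]; split; first exact: SN.
by exists (- y); [exact: SN|rewrite mulrNN mulrN -Ry].
Qed.

Lemma signed_rclean_eltN S b x : GRing.oppr_closed S ->
  signed_rclean_elt_in S b x -> signed_rclean_elt_in S (~~ b) (- x).
Proof.
move=> SN [r [e [Rr Ie ->]]]; exists (- r), e; split=> //; first exact: Reg_inN.
by rewrite signrN mulNr opprD.
Qed.

Lemma rclean_inP S :
  rclean_in S <-> forall x, x \in S -> signed_rclean_elt_in S false x.
Proof.
split=> clS x /clS [r [e [Rr Ie ->]]]; exists r, e; by rewrite expr0 mul1r.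
Qed.

Lemma rclean_in_signed S b x : GRing.oppr_closed S -> rclean_in S ->
  x \in S -> signed_rclean_elt_in S b x.
Proof.
move=> SN /rclean_inP clS Sx; case: b; last exact: clS.
by rewrite -[x]opprK; apply: (signed_rclean_eltN (b := false) SN); apply/clS/SN.
Qed.

End SignedDecomposition.

Section SequenceRing.
Variables (D : pzRingType) (C : {pred D}).
Implicit Types (f : nat -> D) (b : bool).

Lemma RDCP f :
  f \in RDC C <-> exists n, exists2 c, c \in C & forall i, (n <= i)%N -> f i = c.
Proof. by rewrite unfold_in; split=> [/asboolP|?]; last apply/asboolP. Qed.

Lemma RDC_cst c : c \in C -> (fun=> c) \in RDC C.
Proof. by move=> Cc; apply/RDCP; exists 0%N, c. Qed.

Lemma RDC_eventually_in f : f \in RDC C -> exists n, forall m, (n <= m)%N -> f m \in C.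
Proof. by case/RDCP=> n [c Cc fc]; exists n => m /fc ->. Qed.

Lemma add_signrM_apply b f g i :
  (f + (-1) ^+ b * g) i = f i + (-1) ^+ b * g i.
Proof. by case: b. Qed.

Lemma signed_rclean_elt_RDC_apply b f i :
  signed_rclean_elt_in (RDC C) b f -> signed_rclean_elt_in predT b (f i).
Proof.
move=> [r [e [[_ [y _ Ry]] [_ Ie] ->]]]; exists (r i), (e i); split.
- by split=> //; exists (y i) => //; exact: (congr1 (fun g => g i) Ry).
- by split=> //; exact: (congr1 (fun g => g i) Ie).
- by rewrite add_signrM_apply.
Qed.

Lemma signed_rclean_elt_RDC_tail b f : signed_rclean_elt_in (RDC C) b f ->
  exists n, forall m, (n <= m)%N -> signed_rclean_elt_in C b (f m).
Proof.
move=> [r [e [[/RDC_eventually_in [nr Cr] [y /RDC_eventually_in [ny Cy] Ry]]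
               [/RDC_eventually_in [ne Ce] Ie] ->]]].
exists (maxn nr (maxn ny ne)) => m; rewrite !geq_max => /and3P [lerm leym leem].
exists (r m), (e m); split.
- by split; [exact: Cr|exists (y m); [exact: Cy|exact: (congr1 (fun g => g m) Ry)]].
- by split; [exact: Ce|exact: (congr1 (fun g => g m) Ie)].
- by rewrite add_signrM_apply.
Qed.

Lemma signed_rclean_elt_RDC_glue b f n c :
  (forall i, (n <= i)%N -> f i = c) ->
  (forall x : D, signed_rclean_elt_in predT b x) ->
  signed_rclean_elt_in C b c -> signed_rclean_elt_in (RDC C) b f.
Proof.
move=> fc decD [r0 [e0 [[Cr0 [y0 Cy0 Ry0]] [Ce0 Ie0] c_eq]]].
have /choice [T HT] : forall i, exists t : D * D * D,
    [/\ t.1.1 = t.1.1 * t.2 * t.1.1, t.1.2 * t.1.2 = t.1.2,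
        f i = t.1.1 + (-1) ^+ b * t.1.2 & (n <= i)%N -> t = (r0, e0, y0)].
  move=> i; case: (leqP n i) => [le_ni|lt_in].
    by exists (r0, e0, y0); split; rewrite // fc.
  have [r [e [[_ [y _ Ry]] [_ Ie] ->]]] := decD (f i).
  by exists (r, e, y); split; rewrite // leqNgt lt_in.
have RDC_T (g : D * D * D -> D) : g (r0, e0, y0) \in C -> (fun i => g (T i)) \in RDC C.
  move=> Cg; apply/RDCP; exists n, (g (r0, e0, y0)) => // i le_ni.
  by have [_ _ _ ->] := HT i.
exists (fun i => (T i).1.1), (fun i => (T i).1.2); split.
- split; first exact: (RDC_T (fun t => t.1.1)).
  exists (fun i => (T i).2); first exact: (RDC_T snd).
  by apply: funext => i; have [] := HT i.
- split; first exact: (RDC_T (fun t => t.1.2)).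
  by apply: funext => i; have [] := HT i.
- by apply: funext => i; rewrite add_signrM_apply; have [] := HT i.
Qed.

End SequenceRing.

Theorem proposition2p13 (D : pzRingType) (C : {pred D})
    (HC : GRing.subring_closed C) :
  weakly_rclean_in (RDC C) <-> rclean D /\ weakly_rclean_in C.
Proof.
have predTN : GRing.oppr_closed (@predT D) by [].
split=> [wclRDC|[clD wclC]]; first split.
- apply/rclean_inP => x _.
  pose s i := if i == 0%N then x else if i == 1%N then - x else 0.
  have RDCs : s \in RDC C.
    by apply/RDCP; exists 2%N, 0; [exact: (GRing.subring_closedB HC).1|case=> [|[|]]].
  have /weakly_rclean_eltP [b sb] := wclRDC s RDCs.
  have := signed_rclean_elt_RDC_apply 1 sb; have := signed_rclean_elt_RDC_apply 0 sb.
  by case: b {sb} => // _ /(signed_rclean_eltN predTN); rewrite opprK.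
- move=> x Cx; have /weakly_rclean_eltP [b sb] := wclRDC _ (RDC_cst Cx).
  have [n tail] := signed_rclean_elt_RDC_tail sb.
  by apply/weakly_rclean_eltP; exists b; exact: (tail n).
- move=> f /RDCP [n [c Cc fc]]; have /weakly_rclean_eltP [b sc] := wclC c Cc.
  apply/weakly_rclean_eltP; exists b; apply: (signed_rclean_elt_RDC_glue fc _ sc).
  by move=> x; apply: rclean_in_signed.
Qed.
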